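(* For every $N\ge1$ and positive integers $n_0,\dots,n_N$, the maximum diversity gain of the $(n_0,\dots,n_N)$ Rayleigh product channel satisfies $$\frac{\tilde n_0\tilde n_1}{2}<d(0)\le\tilde n_0\tilde n_1 .$$
   Context: $\tilde n_0\le\cdots\le\tilde n_N$ is the nondecreasing rearrangement of $(n_0,\dots,n_N)$, $c_i=1-i+\min_{k=1,\dots,N}\lfloor(\sum_{l=0}^{k}\tilde n_l-i)/k\rfloor$ for $i=1,\dots,\tilde n_0$, and $d(0)=\sum_{i=1}^{\tilde n_0}c_i$, which is the maximum diversity gain of the Rayleigh product channel $\mathbf y=\sqrt{\mathsf{SNR}/(n_1\cdots n_N)}\mathbf H_1\cdots\mathbf H_N\mathbf x+\mathbf z$ with independent i.i.d. $\mathcal{CN}(0,1)$ matrices $\mathbf H_i\in\mathbb C^{n_{i-1}\times n_i}$. *)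

From HB Require Import structures.
From mathcomp Require Import all_boot all_order all_algebra.
Set Implicit Arguments. Unset Strict Implicit. Unset Printing Implicit Defensive.
Import Order.TTheory GRing.Theory Num.Theory.
Local Open Scope ring_scope.

(* ns = [:: n_0; ...; n_N] : the dimensions of the Rayleigh product channel. *)

Definition ntilde (ns : seq nat) (l : nat) : nat :=
  nth 0%N (sort leq ns) l.

Definition Nmat (ns : seq nat) : nat := (size ns).-1.

(* floor((sum_{l=0}^k \tilde n_l - i)/k), computed in int (floor division
   for a positive divisor k). *)
Definition fk (ns : seq nat) (i k : nat) : int :=
  ((\sum_(0 <= l < k.+1) (ntilde ns l)%:Z - i%:Z) %/ k%:Z)%Z.

(* min_{k=1,...,N} fk ns i k  (for N >= 1). *)
Definition minfk (ns : seq nat) (i : nat) : int :=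
  foldr (fun k m => Order.min (fk ns i k) m) (fk ns i 1%N)
        (iota 2 (Nmat ns).-1).

Definition c_coef (ns : seq nat) (i : nat) : int :=
  1 - i%:Z + minfk ns i.

Definition d0 (ns : seq nat) : int :=
  \sum_(1 <= i < (ntilde ns 0).+1) c_coef ns i.

From HB Require Import structures.
From mathcomp Require Import all_boot all_order all_algebra zify.
Import Order.TTheory GRing.Theory Num.Theory.
Local Open Scope ring_scope.

(* Write a = \tilde n_0 <= b = \tilde n_1 for the two smallest dimensions and
   c_i + i = 1 + min_k f_k(i), where f_k(i) = floor((\sum_{l<=k} \tilde n_l - i)/k).
   - Upper bound: the minimum is at most f_1(i) = a + b - i, hence
     c_i <= a + b + 1 - 2i, and summing over 1 <= i <= a gives d(0) <= ab,
     since \sum_{i=1}^a 2i = a(a+1).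
   - Lower bound: for i <= a every f_k(i) is at least b, because
     \sum_{l<=k} \tilde n_l - i >= (a - i) + k b; hence c_i >= b + 1 - i and
     2 d(0) >= a(2b + 1 - a), which exceeds ab as 0 < a <= b. *)

Section IteratedMin.
Variables (disp : Order.disp_t) (T : orderType disp) (f : nat -> T).

Lemma foldr_min_le_seed (x : T) (s : seq nat) :
  (foldr (fun k m => Order.min (f k) m) x s <= x)%O.
Proof. by elim: s => //= k s IH; rewrite ge_min IH orbT. Qed.

Lemma foldr_min_ge (x y : T) (s : seq nat) :
  (y <= x)%O -> (forall k, k \in s -> y <= f k)%O ->
  (y <= foldr (fun k m => Order.min (f k) m) x s)%O.
Proof.
move=> yx; elim: s => //= k s IH yf; rewrite le_min yf ?mem_head //= IH //.
by move=> j js; apply: yf; rewrite in_cons js orbT.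
Qed.
End IteratedMin.

Lemma ntilde_mono ns l m :
  (m < size ns)%N -> (l <= m)%N -> (ntilde ns l <= ntilde ns m)%N.
Proof.
move=> m_lt l_le_m; apply: (sorted_leq_nth leq_trans leqnn 0%N (sort_sorted leq_total ns));
  by rewrite // inE size_sort // (leq_ltn_trans l_le_m).
Qed.

Lemma ntilde_pos ns l :
  all (fun m => 0 < m)%N ns -> (l < size ns)%N -> (0 < ntilde ns l)%N.
Proof.
move=> /allP ns_pos l_lt; apply: ns_pos.
by rewrite -(mem_sort leq) /ntilde mem_nth // size_sort.
Qed.

Lemma partial_sum_ge ns k :
  (k < size ns)%N -> (k * ntilde ns 1 <= \sum_(1 <= l < k.+1) ntilde ns l)%N.
Proof.
elim: k => [|k IH] k_lt; first by rewrite mul0n.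
rewrite big_nat_recr //= mulSn addnC leq_add ?ntilde_mono //.
exact/IH/ltnW.
Qed.

Lemma fk_1 ns i : fk ns i 1 = (ntilde ns 0)%:Z + (ntilde ns 1)%:Z - i%:Z.
Proof. by rewrite /fk divz1 !big_nat_recr //= big_geq // add0r. Qed.

Lemma fk_ge ns i k : (1 <= k)%N -> (k < size ns)%N -> (i <= ntilde ns 0)%N ->
  (ntilde ns 1)%:Z <= fk ns i k.
Proof.
move=> k_ge1 k_lt i_le; rewrite /fk lez_divRL ?ltz_nat //.
rewrite -(big_morph _ PoszD (erefl 0%:Z)) lerBrDr -PoszM -PoszD lez_nat big_ltn //.
by rewrite mulnC addnC leq_add ?partial_sum_ge.
Qed.

Lemma minfk_le ns i : minfk ns i <= (ntilde ns 0)%:Z + (ntilde ns 1)%:Z - i%:Z.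
Proof. by rewrite -fk_1; apply: foldr_min_le_seed. Qed.

Lemma minfk_ge ns i : (1 < size ns)%N -> (i <= ntilde ns 0)%N ->
  (ntilde ns 1)%:Z <= minfk ns i.
Proof.
move=> size_gt1 i_le; apply: foldr_min_ge; first exact: fk_ge.
move=> k; rewrite mem_iota /Nmat => /andP[k_ge2 k_lt].
apply: fk_ge => //; first exact: ltnW.
by move: k_lt; case: (size ns) size_gt1 => [|[|n]] //= _; rewrite add2n.
Qed.

Lemma c_coef_le ns i :
  c_coef ns i <= (ntilde ns 0 + ntilde ns 1 + 1)%:Z - 2 * i%:Z.
Proof. by have := minfk_le ns i; rewrite /c_coef; lia. Qed.

Lemma c_coef_ge ns i : (1 < size ns)%N -> (i <= ntilde ns 0)%N ->
  (ntilde ns 1 + 1)%:Z - i%:Z <= c_coef ns i.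
Proof. by move=> size_gt1 i_le; have := minfk_ge ns i size_gt1 i_le; rewrite /c_coef; lia. Qed.

(* Summing an affine function of slope -2: since \sum_{i=1}^a 2i = a(a+1). *)
Lemma sum_sub_double a (x : int) :
  \sum_(1 <= i < a.+1) (x - 2 * i%:Z) = a%:Z * x - a%:Z * (a%:Z + 1).
Proof.
elim: a => [|a IH]; first by rewrite big_geq // !mul0r subr0.
by rewrite big_nat_recr //= IH; lia.
Qed.

Lemma d0_le ns : d0 ns <= (ntilde ns 0 * ntilde ns 1)%:Z.
Proof.
set a := ntilde ns 0; set b := ntilde ns 1.
have := @ler_sum_nat _ 1 a.+1 _ _ (fun i _ => c_coef_le ns i).
by rewrite sum_sub_double -/a -/b -/(d0 ns); lia.
Qed.

(* Lower bound, doubled to stay integral: 2 d(0) >= a (2b + 1 - a). *)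
Lemma d0_ge ns : (1 < size ns)%N ->
  (ntilde ns 0)%:Z * (2 * (ntilde ns 1)%:Z + 1 - (ntilde ns 0)%:Z) <= 2 * d0 ns.
Proof.
move=> size_gt1; set a := ntilde ns 0; set b := ntilde ns 1.
have c_ge2 i : (1 <= i < a.+1)%N -> 2 * (b + 1)%:Z - 2 * i%:Z <= 2 * c_coef ns i.
  by case/andP=> _ i_le; have := c_coef_ge ns i size_gt1 i_le; lia.
have := @ler_sum_nat _ 1 a.+1 _ _ c_ge2.
by rewrite sum_sub_double -mulr_sumr -/(d0 ns); lia.
Qed.

Theorem corollary3 (N : nat) (ns : seq nat) :
  (1 <= N)%N -> size ns = N.+1 -> all (fun m => 0 < m)%N ns ->
  ((ntilde ns 0 * ntilde ns 1)%:R / 2 : rat) < (d0 ns)%:~R /\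
  d0 ns <= (ntilde ns 0 * ntilde ns 1)%:Z.
Proof.
move=> N_ge1 size_ns ns_pos; split; last exact: d0_le.
have size_gt1 : (1 < size ns)%N by rewrite size_ns ltnS.
have a_pos : (0 < ntilde ns 0)%N by rewrite ntilde_pos // (ltn_trans _ size_gt1).
have a_le_b : (ntilde ns 0 <= ntilde ns 1)%N by rewrite ntilde_mono.
have lt_double : (ntilde ns 0 * ntilde ns 1)%:Z < 2 * d0 ns.
  by have := d0_ge ns size_gt1; nia.
rewrite ltr_pdivrMr // mulrC -[2 : rat]/(2%:~R) -intrM -[_%:R]/(_%:Z%:~R) ltr_int.
exact: lt_double.
Qed.
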